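(* Let $G$ be a $\sigma$-finite abelian group and fix an exhausting sequence $(G_n)_{n\geq 1}$ of $G$. Let $A\subset G$ and $B\subset G$ satisfy at least one of the following three hypotheses: \begin{enumerate} \item $\underline{\mathrm{d}}(A+B)< \underline{\mathrm{d}}(A)+\underline{\mathrm{d}}(B)$; \item $\overline{\mathrm{d}}(A+B)< \overline{\mathrm{d}}(A)+\overline{\mathrm{d}}(B)$, and $A=B$ or $A=-B$; \item $\overline{\mathrm{d}}(A+B)< \overline{\mathrm{d}}(A)+\underline{\mathrm{d}}(B)$. \end{enumerate} Then the subgroup $H=\mathrm{Stab}(A+B)$ has finite index $q=[G:H]$ in $G$, and $H$ admits a density, with $\mathrm{d}(H)=q^{-1}$. Moreover, if $a,b,c$ denote the numbers of cosets of $H$ in $G$ that meet $A$, $B$, $A+B$ respectively, then $c=a+b-1$.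
   Context: A group $G$ is $\sigma$-finite if it is infinite and admits an exhausting sequence, i.e. a non-decreasing sequence $(G_n)_{n\ge1}$ of finite subgroups with $G=\bigcup_{n\ge1}G_n$. For $A\subset G$ (with respect to the fixed exhausting sequence) the lower and upper asymptotic densities are $\underline{\mathrm{d}}(A)=\liminf_{n\to\infty}\frac{|A\cap G_n|}{|G_n|}$ and $\overline{\mathrm{d}}(A)=\limsup_{n\to\infty}\frac{|A\cap G_n|}{|G_n|}$; if they coincide, $A$ is said to admit a density, and the common value is denoted $\mathrm{d}(A)$. For $X\subset G$, $\mathrm{Stab}(X)=\{g\in G: g+x\in X \text{ for all } x\in X\}$ is the stabilizer (period) of $X$. $A+B=\{a+b: a\in A, b\in B\}$ and $-B=\{-b: b\in B\}$. *)

From HB Require Import structures.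
From mathcomp Require Import all_boot all_order all_algebra.
From mathcomp Require Import finmap.
From mathcomp Require Import all_classical all_reals all_analysis.
Set Implicit Arguments. Unset Strict Implicit. Unset Printing Implicit Defensive.
Import Order.TTheory GRing.Theory Num.Theory.
Local Open Scope classical_set_scope.
Local Open Scope ring_scope.

(* (G_n) is an exhausting sequence: non-decreasing finite subgroups covering G
   (indexed from 0 instead of 1, which is immaterial). *)
Definition is_subgroup (G : zmodType) (H : set G) :=
  H 0 /\ forall x y, H x -> H y -> H (x - y).

Definition exhausting_seq (G : zmodType) (Gn : nat -> set G) :=
  [/\ forall n, finite_set (Gn n),
      forall n, is_subgroup (Gn n),
      forall n, Gn n `<=` Gn n.+1
    & \bigcup_n Gn n = [set: G]].

Definition sigma_finite_seq (G : zmodType) (Gn : nat -> set G) :=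
  infinite_set [set: G] /\ exhausting_seq Gn.

Definition dens_ratio (R : realType) (G : zmodType) (Gn : nat -> set G)
  (A : set G) (n : nat) : R :=
  (#|` fset_set (A `&` Gn n)|%fset)%:R / (#|` fset_set (Gn n)|%fset)%:R.

Definition ldens (R : realType) (G : zmodType) (Gn : nat -> set G) (A : set G) : R :=
  limn_inf (dens_ratio R Gn A).
Definition udens (R : realType) (G : zmodType) (Gn : nat -> set G) (A : set G) : R :=
  limn_sup (dens_ratio R Gn A).

Definition sumset (G : zmodType) (A B : set G) : set G :=
  [set a + b | a in A & b in B].
Definition oppset (G : zmodType) (B : set G) : set G := [set - b | b in B].

Definition Stab (G : zmodType) (X : set G) : set G :=
  [set g | forall x, X x -> X (g + x)].

Definition coset (G : zmodType) (H : set G) (g : G) : set G := [set g + h | h in H].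

Definition cosets (G : zmodType) (H : set G) : set (set G) :=
  [set C | exists g, C = coset H g].

Definition cosets_meeting (G : zmodType) (H : set G) (A : set G) : set (set G) :=
  [set C | cosets H C /\ C `&` A !=set0].

From HB Require Import structures.
From mathcomp Require Import all_boot all_order all_algebra.
From mathcomp Require Import finmap.
From mathcomp Require Import all_classical all_reals all_analysis.
From mathcomp Require Import zify lra.
Import Order.TTheory GRing.Theory Num.Theory.
Local Open Scope classical_set_scope.
Local Open Scope ring_scope.
Set Implicit Arguments. Unset Strict Implicit. Unset Printing Implicit Defensive.

(* Truncating to [G_n], each of the three hypotheses yields [d > 0] such that
   [|(A + B)_n| + d |G_n| < |A_n| + |B_n|] for infinitely many [n].  For such
   [n], the weak Kneser inequality [|X| + |Y| <= |X + Y| + |Stab (X + Y)|] for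
   finite sets, applied to [A_n] and [B_n], makes the stabilizer [K_n] of
   [A_n + B_n] larger than [d |G_n|].  Elements that are pairwise incongruent
   modulo [H = Stab (A + B)] lie, for [n] large, in distinct cosets of [K_n];
   hence there are fewer than [1/d] of them and [H] has a finite index [q].
   Truncations of [H]-periodic sets are then unions of whole cosets of [H_n],
   which gives [d(H) = 1/q] and [c < a + b], while the weak Kneser inequality
   for the truncated [H]-saturations of [A] and [B] gives [a + b <= c + 1]. *)

Section FiniteSumsets.
Local Open Scope fset_scope.
Local Open Scope ring_scope.
Variable G : zmodType.
Implicit Types (A B X Y P Q Z : {fset G}) (g w x y z : G).

Definition fsumset A B : {fset G} := [fset a + b | a in A, b in B].
Definition fshift g X : {fset G} := [fset g + x | x in X].
(* Taking the periods among the differences [X - X] makes the stabilizer a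
   finite set; for [X] nonempty every period is such a difference. *)
Definition fstab X : {fset G} :=
  [fset d in [fset x - y | x in X, y in X] | fshift d X `<=` X].
Definition stab_weight X : nat := #|` X| + #|` fstab X|.

Lemma fsumsetP A B z :
  reflect (exists a b, [/\ a \in A, b \in B & z = a + b]) (z \in fsumset A B).
Proof.
apply: (iffP (imfset2P _ _ _ _ _)) => [[a aA [b bB ->]]|[a [b [aA bB ->]]]].
  by exists a, b.
by exists a => //; exists b.
Qed.

Lemma mem_fsumset A B a b : a \in A -> b \in B -> a + b \in fsumset A B.
Proof. by move=> aA bB; apply/fsumsetP; exists a, b. Qed.

Lemma fsumset_neq0 A B : A != fset0 -> B != fset0 -> fsumset A B != fset0.
Proof.
move=> /fset0Pn[a aA] /fset0Pn[b bB]; apply/fset0Pn; exists (a + b).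
exact: mem_fsumset.
Qed.

Lemma fshiftP g X y : (y \in fshift g X) = (y - g \in X).
Proof.
apply/imfsetP/idP => [[x xX ->]|yX]; first by rewrite addrC addKr.
by exists (y - g) => //; rewrite addrC subrK.
Qed.

Lemma mem_fshift g X x : (g + x \in fshift g X) = (x \in X).
Proof. by rewrite fshiftP addrC addKr. Qed.

Lemma card_fshift g X : #|` fshift g X| = #|` X|.
Proof. by rewrite card_imfset //=; apply: addrI. Qed.

Section Stabilizer.
Variable X : {fset G}.
Hypothesis X0 : X != fset0.

Lemma fstabP g : reflect (forall x, x \in X -> g + x \in X) (g \in fstab X).
Proof.
rewrite !inE /=; apply: (iffP andP) => [[_ /fsubsetP sub] x xX|gX].
  by apply: sub; rewrite mem_fshift.
have /fset0Pn[x0 x0X] := X0; split.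
  apply/imfset2P; exists (g + x0); first exact: gX.
  by exists x0 => //; rewrite addrK.
by apply/fsubsetP => y; rewrite fshiftP => /gX; rewrite addrC subrK.
Qed.

Lemma fshift_fstab g : g \in fstab X -> fshift g X = X.
Proof.
move=> /fstabP gX; apply/fsetP/fsubset_cardP; first by rewrite card_fshift.
by apply/fsubsetP => y; rewrite fshiftP => /gX; rewrite addrC subrK.
Qed.

Lemma fstab0 : 0 \in fstab X.
Proof. by apply/fstabP => x; rewrite add0r. Qed.

Lemma fstabN g : g \in fstab X -> - g \in fstab X.
Proof.
move=> gX; apply/fstabP => x.
by rewrite -{1}(fshift_fstab gX) fshiftP addrC.
Qed.

Lemma fstabD g h : g \in fstab X -> h \in fstab X -> g + h \in fstab X.
Proof.
move=> /fstabP gX /fstabP hX; apply/fstabP => x xX.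
by rewrite -addrA; apply/gX/hX.
Qed.

Lemma fstabB g h : g \in fstab X -> h \in fstab X -> g - h \in fstab X.
Proof. by move=> gX hX; apply/fstabD/fstabN. Qed.

End Stabilizer.

Lemma fstab_fsumsetl A B g : A != fset0 -> B != fset0 ->
  g \in fstab A -> g \in fstab (fsumset A B).
Proof.
move=> A0 B0 /(fstabP A0) gA; apply/(fstabP (fsumset_neq0 A0 B0)) => z.
by move=> /fsumsetP[a [b [aA bB ->]]]; rewrite addrA mem_fsumset ?gA.
Qed.

Lemma fstabI_sub_fstabU X Y : X != fset0 -> Y != fset0 ->
  fstab X `&` fstab Y `<=` fstab (X `|` Y).
Proof.
move=> X0 Y0; have XY0 : X `|` Y != fset0.
  by apply: fsubset_neq0 X0; apply: fsubsetUl.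
apply/fsubsetP => g /fsetIP[/(fstabP X0) gX /(fstabP Y0) gY].
by apply/(fstabP XY0) => z /fsetUP[/gX|/gY] h; rewrite in_fsetU h ?orbT.
Qed.

(* [P + q0] and [p0 + Q] lie in [P + Q] and meet inside [p0 + q0 + Z]. *)
Lemma card_add_le_fsumset P Q Z p0 q0 : p0 \in P -> q0 \in Q ->
  (forall p q, p \in P -> q \in Q -> p - p0 = q - q0 -> p - p0 \in Z) ->
  (#|` P| + #|` Q| <= #|` fsumset P Q| + #|` Z|)%N.
Proof.
move=> p0P q0Q PQZ.
have sub_sum : fshift q0 P `|` fshift p0 Q `<=` fsumset P Q.
  apply/fsubsetP => z /fsetUP[]; rewrite fshiftP => zP.
    by rewrite -(subrK q0 z) mem_fsumset.
  by rewrite -(subrK p0 z) addrC mem_fsumset.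
have meet_sub : fshift q0 P `&` fshift p0 Q `<=` fshift (p0 + q0) Z.
  apply/fsubsetP => z /fsetIP[]; rewrite !fshiftP => zP zQ.
  rewrite opprD addrA (addrAC z); apply: PQZ zP zQ _.
  by rewrite addrAC.
rewrite -(card_fshift q0 P) -(card_fshift p0 Q) -cardfsUI.
rewrite -(card_fshift (p0 + q0) Z).
by apply: leq_add; apply: fsubset_leq_card.
Qed.

Definition fstab_into X Y w := [fset l in fstab Y | w + l \in X].

Lemma fstab_intoP X Y w l :
  (l \in fstab_into X Y w) = (l \in fstab Y) && (w + l \in X).
Proof. by rewrite in_fset. Qed.

Lemma card_fstab_into X Y w :
  (#|` fstab_into X Y w| + #|` fstab Y `\` fstab_into X Y w| = #|` fstab Y|)%N.
Proof.
rewrite -[RHS](cardfsID (fstab_into X Y w)); congr (#|` _| + _)%N.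
by apply/esym/fsetIidPr/fsubsetP => l; rewrite fstab_intoP => /andP[].
Qed.

(* Apply [card_add_le_fsumset] to the periods of [Y] moving [w] out of [X]
   and the periods of [X] keeping [w] in [Y]: [w] plus their sums lie in
   [Y `\` X]. *)
Lemma card_fstab_escape X Y w p0 : X != fset0 -> Y != fset0 ->
  w \in X -> w \in Y -> p0 \in fstab Y -> w + p0 \notin X ->
  (#|` fstab Y `\` fstab_into X Y w| + #|` fstab_into Y X w| <=
     #|` Y `\` X| + #|` fstab X `&` fstab Y|)%N.
Proof.
move=> X0 Y0 wX wY p0Y wp0X.
have p0P : p0 \in fstab Y `\` fstab_into X Y w.
  by rewrite in_fsetD fstab_intoP p0Y (negbTE wp0X).
have q0Q : 0 \in fstab_into Y X w by rewrite fstab_intoP fstab0 // addr0 wY.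
apply: leq_trans (card_add_le_fsumset (Z := fstab X `&` fstab Y) p0P q0Q _) _.
  move=> p q /fsetDP[pY _]; rewrite fstab_intoP subr0 => /andP[qX _] E.
  by rewrite in_fsetI E qX -E fstabB.
rewrite leq_add2r -(card_fshift w); apply: fsubset_leq_card.
apply/fsubsetP => z; rewrite fshiftP.
move=> /fsumsetP[p [q [/fsetDP[pY]]]]; rewrite !fstab_intoP pY /=.
move=> wpX /andP[qX wqY] E; have {E}-> : z = w + p + q.
  by rewrite -addrA -E addrC subrK.
rewrite in_fsetD -addrA addrCA (fstabP Y0 _ pY) // andbT.
apply: contra wpX => /(fstabP X0 _ (fstabN X0 qX)).
by rewrite [w + q]addrC addrCA addKr addrC.
Qed.

Lemma cardfsU_fsetD X Y : #|` X `|` Y| = (#|` X| + #|` Y `\` X|)%N.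
Proof. by have := cardfsUI X Y; have := cardfsID X Y; rewrite fsetIC; lia. Qed.

Section UnionOfLightSets.
Variables X Y : {fset G}.
Hypotheses (X0 : X != fset0) (Y0 : Y != fset0).
Hypothesis XU : (stab_weight (X `|` Y) < stab_weight X)%N.
Hypothesis YU : (stab_weight (X `|` Y) < stab_weight Y)%N.

Lemma fstab_into_all w l : w \in X -> w \in Y -> l \in fstab Y -> w + l \in X.
Proof.
move=> wX wY lY; apply: contraT => wlX.
have := XU; have := YU; rewrite /stab_weight => YU' XU'.
have cardXY := cardfsU_fsetD X Y; have := cardfsU_fsetD Y X.
rewrite fsetUC => cardYX.
have escY := card_fstab_escape X0 Y0 wX wY lY wlX.
have IU := fsubset_leq_card (fstabI_sub_fstabU X0 Y0).
have := card_fstab_into Y X w; have := card_fstab_into X Y w => cardY cardX.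
have : (0 < #|` fstab X `\` fstab_into Y X w|)%N by lia.
rewrite cardfs_gt0 => /fset0Pn[k]; rewrite in_fsetD fstab_intoP => /andP[].
rewrite negb_and => /orP[/negP//|wkY kX].
have := card_fstab_escape Y0 X0 wY wX kX wkY.
by rewrite fsetIC; lia.
Qed.

End UnionOfLightSets.

Lemma card_fstab_lt X Y l : X != fset0 -> Y != fset0 ->
  (stab_weight (X `|` Y) < stab_weight X)%N ->
  (stab_weight (X `|` Y) < stab_weight Y)%N ->
  l \in fstab Y -> l \notin fstab X -> (#|` fstab X| < #|` fstab Y|)%N.
Proof.
move=> X0 Y0 XU YU lY lX.
have [x xX lxX] : exists2 x, x \in X & l + x \notin X.
  by apply/allPn; apply: contra lX => /allP lXX; apply/(fstabP X0).
have xY : x \notin Y.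
  by apply: contra lxX => xY; rewrite addrC (fstab_into_all X0 Y0).
have XY_lt : (#|` X `\` Y| < #|` fstab Y|)%N.
  by have := YU; rewrite /stab_weight fsetUC cardfsU_fsetD; lia.
apply: leq_ltn_trans XY_lt.
rewrite -(card_fshift x); apply: fsubset_leq_card; apply/fsubsetP => z.
rewrite fshiftP => zX.
have xzX : z \in X by rewrite -(subrK x z) (fstabP X0 _ zX).
rewrite in_fsetD xzX andbT; apply: contra xY => zY.
rewrite fsetUC in XU YU.
have := fstab_into_all Y0 X0 YU XU zY xzX (fstabN X0 zX).
by rewrite opprB addrC subrK.
Qed.

Lemma stab_weight_fsetU X Y : X `&` Y != fset0 ->
  (minn (stab_weight X) (stab_weight Y) <= stab_weight (X `|` Y))%N.
Proof.
move=> XY0.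
have X0 : X != fset0 by apply: fsubset_neq0 XY0; apply: fsubsetIl.
have Y0 : Y != fset0 by apply: fsubset_neq0 XY0; apply: fsubsetIr.
have IU := fstabI_sub_fstabU X0 Y0.
have [XY|/fsubsetPn[k kX kY]] := boolP (fstab X `<=` fstab Y).
  apply: leq_trans (geq_minl _ _) (leq_add _ _).
    by apply/fsubset_leq_card/fsubsetUl.
  by apply/fsubset_leq_card/(fsubset_trans _ IU); rewrite fsubsetIidl.
have [YX|/fsubsetPn[l lY lX]] := boolP (fstab Y `<=` fstab X).
  apply: leq_trans (geq_minr _ _) (leq_add _ _).
    by apply/fsubset_leq_card/fsubsetUr.
  by apply/fsubset_leq_card/(fsubset_trans _ IU); rewrite fsubsetIidr.
rewrite leqNgt; apply/negP; rewrite leq_min => /andP[XU YU].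
have := card_fstab_lt X0 Y0 XU YU lY lX; rewrite fsetUC in XU YU.
by have := card_fstab_lt Y0 X0 YU XU kX kY; lia.
Qed.

Lemma stab_weight_bigfcup (I : eqType) (s : seq I) (F : I -> {fset G}) z m :
  s != [::] -> (forall i, i \in s -> z \in F i) ->
  (forall i, i \in s -> m <= stab_weight (F i))%N ->
  (m <= stab_weight (\bigcup_(i <- s) F i))%N.
Proof.
elim: s => [//|i s IH] _ zF mF; rewrite big_cons.
have [->|s0] := eqVneq s [::]; first by rewrite big_nil fsetU0 mF ?mem_head.
have sub j : j \in s -> j \in i :: s by move=> js; rewrite in_cons js orbT.
apply: leq_trans (stab_weight_fsetU _); last first.
  have /hasP[j js _] : has predT s by rewrite has_predT lt0n size_eq0.
  apply/fset0Pn; exists z; rewrite in_fsetI zF ?mem_head //=.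
  by apply/bigfcupP; exists j; rewrite ?js ?zF ?sub.
rewrite leq_min mF ?mem_head //=.
by apply: IH s0 _ _ => j js; [apply: zF | apply: mF]; apply: sub.
Qed.

Lemma card_bigfcup_disjoint (I : choiceType) (K : {fset I})
    (F : I -> {fset G}) k :
  (forall i, i \in K -> #|` F i| = k) ->
  (forall i j, i \in K -> j \in K -> i != j -> [disjoint F i & F j]) ->
  #|` \bigcup_(i <- K) F i| = (#|` K| * k)%N.
Proof.
move=> cardF disjF; rewrite card_fset_sum1 partition_disjoint_bigfcup //.
rewrite (eq_big_seq (fun=> k)) => [|i iK]; last first.
  by rewrite -card_fset_sum1 cardF.
by rewrite big_const_seq count_predT iter_addn_0 mulnC.
Qed.

Definition etransL A B e := A `|` fshift e B.
Definition etransR A B e := [fset b in B | e + b \in A].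

Lemma card_etrans A B e :
  (#|` etransL A B e| + #|` etransR A B e| = #|` A| + #|` B|)%N.
Proof.
have AeB : A `&` fshift e B = fshift e (etransR A B e).
  apply/fsetP => x; rewrite in_fsetI !fshiftP !inE /=.
  by rewrite [e + _]addrC subrK andbC.
by rewrite -(card_fshift e (etransR _ _ _)) -AeB cardfsUI card_fshift.
Qed.

Lemma fsumset_etrans_sub A B e :
  fsumset (etransL A B e) (etransR A B e) `<=` fsumset A B.
Proof.
apply/fsubsetP => z /fsumsetP[u [v [/fsetUP uAB]]]; rewrite !inE /=.
move=> /andP[vB evA] ->; case: uAB => [uA|]; first exact: mem_fsumset.
rewrite fshiftP => ueB.
by rewrite -(subrK e u) -addrA addrC mem_fsumset // addrC.
Qed.

(* If no [a - b0 + B] leaves [A], then [B - b0] consists of periods of [A]. *)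
Lemma weak_kneser_saturated A B b0 : A != fset0 -> b0 \in B ->
  (forall a, a \in A -> fshift (a - b0) B `<=` A) ->
  (#|` A| + #|` B| <= stab_weight (fsumset A B))%N.
Proof.
move=> A0 b0B AB; have B0 : B != fset0 by apply/fset0Pn; exists b0.
apply: leq_add.
  rewrite -(card_fshift b0 A); apply: fsubset_leq_card; apply/fsubsetP => y.
  by rewrite fshiftP => yA; rewrite -(subrK b0 y) mem_fsumset.
rewrite -(card_fshift (- b0) B); apply: fsubset_leq_card; apply/fsubsetP => x.
rewrite fshiftP opprK => xB; apply: fstab_fsumsetl => //.
apply/(fstabP A0) => a aA; apply: (fsubsetP (AB a aA)).
by rewrite fshiftP opprB addrA addrAC addrK.
Qed.

(* Induction on [B] through Dyson's e-transform: [A + B] is the union of the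
   sumsets of the e-transforms for [e = a - b0], which all contain [a0 + b0]
   and have a smaller second summand. *)
Theorem weak_kneser A B : A != fset0 -> B != fset0 ->
  (#|` A| + #|` B| <= stab_weight (fsumset A B))%N.
Proof.
elim/finSet_rect: B A => B IH A A0 B0.
have /fset0Pn[b0 b0B] := B0; have /fset0Pn[a0 a0A] := A0.
pose N := [fset a in A | ~~ (fshift (a - b0) B `<=` A)].
have NP a : (a \in N) = (a \in A) && ~~ (fshift (a - b0) B `<=` A).
  by rewrite in_fset.
have [N0|/fset0Pn[a1 a1N]] := eqVneq N fset0.
  apply: (weak_kneser_saturated A0 b0B) => a aA.
  by have := in_fset0 a; rewrite -N0 NP aA => /negbFE.
pose C a := fsumset (etransL A B (a - b0)) (etransR A B (a - b0)).
have b0R a : a \in A -> b0 \in etransR A B (a - b0).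
  by move=> aA; rewrite !inE /= b0B subrK.
have N_A a : a \in N -> a \in A by rewrite NP => /andP[].
have cover : fsumset A B = \bigcup_(a <- N) C a.
  apply/eqP; rewrite eqEfsubset; apply/andP; split; last first.
    by apply/bigfcupsP => a _ _; apply: fsumset_etrans_sub.
  apply/fsubsetP => z /fsumsetP[a [b [aA bB ->]]].
  have -> : a + b = (a - b0 + b) + b0 by rewrite addrAC subrK.
  have [aN|aN] := boolP (a \in N).
    apply/bigfcupP; exists a; rewrite ?aN //.
    by rewrite mem_fsumset ?b0R // in_fsetU mem_fshift bB orbT.
  apply/bigfcupP; exists a1; rewrite ?a1N //.
  rewrite mem_fsumset ?b0R ?N_A // in_fsetU; apply/orP; left.
  by move: aN; rewrite NP aA negbK => /fsubsetP; apply; rewrite mem_fshift.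
rewrite cover; apply: (@stab_weight_bigfcup _ _ _ (a0 + b0)).
- apply/eqP => Nnil; move: a1N.
  by rewrite -[a1 \in N]/(a1 \in (N : seq G)) Nnil.
- by move=> a aN; rewrite mem_fsumset ?b0R ?N_A // in_fsetU a0A.
move=> a; rewrite NP => /andP[aA /fsubsetPn[y]]; rewrite fshiftP => yB yA.
rewrite -(card_etrans A B (a - b0)); apply: IH.
- rewrite fproperEneq; apply/andP; split.
    apply: contraNneq yA => E; move: yB.
    by rewrite -E !inE /= [_ + (y - _)]addrC subrK => /andP[].
  by apply/fsubsetP => b; rewrite !inE /= => /andP[].
- by apply/fset0Pn; exists a0; rewrite in_fsetU a0A.
by apply/fset0Pn; exists b0; apply: b0R.
Qed.

End FiniteSumsets.

Definition frequently (P : nat -> Prop) :=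
  forall N, exists2 n, (N <= n)%N & P n.

Section LimInfSup.
Variables (R : realType) (u : R^nat).
Hypothesis u_bounded : bounded_fun u.

Lemma limn_sup_lt_eventually L : limn_sup u < L ->
  exists N, forall n, (N <= n)%N -> u n < L.
Proof.
rewrite limn_supE //.
have ne : range (sups u) !=set0 by exists (sups u 0%N), 0%N.
move=> /(inf_lt ne)[_ [N _ <-] supL]; exists N => n Nn.
apply: le_lt_trans supL; apply: ub_le_sup; last by exists n.
exact/has_ubound_sdrop/bounded_fun_has_ubound.
Qed.

Lemma limn_inf_gt_eventually L : L < limn_inf u ->
  exists N, forall n, (N <= n)%N -> L < u n.
Proof.
rewrite limn_infE //.
have ne : range (infs u) !=set0 by exists (infs u 0%N), 0%N.
move=> /(sup_gt ne)[_ [N _ <-] Linf]; exists N => n Nn.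
apply: lt_le_trans Linf _; apply: ge_inf; last by exists n.
exact/has_lbound_sdrop/bounded_fun_has_lbound.
Qed.

Lemma limn_sup_gt_frequently L : L < limn_sup u ->
  frequently (fun n => L < u n).
Proof.
rewrite limn_supE // => Lsup N.
have : inf (range (sups u)) <= sups u N.
  by apply: ge_inf; [exact: bounded_fun_has_lbound_sups | exists N].
have ne : sdrop u N !=set0 by exists (u N); exists N => /=.
by move=> /(lt_le_trans Lsup) /(sup_gt ne)[_ [n Nn <-] Lu]; exists n.
Qed.

Lemma limn_inf_lt_frequently L : limn_inf u < L ->
  frequently (fun n => u n < L).
Proof.
rewrite limn_infE // => infL N.
have : infs u N <= sup (range (infs u)).
  by apply: ub_le_sup; [exact: bounded_fun_has_ubound_infs | exists N].
have ne : sdrop u N !=set0 by exists (u N); exists N => /=.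
by move=> /le_lt_trans /(_ infL) /(inf_lt ne)[_ [n Nn <-] uL]; exists n.
Qed.

End LimInfSup.

Lemma frequently_and_eventually (P Q : nat -> Prop) :
  (exists N, forall n, (N <= n)%N -> P n) ->
  frequently Q -> frequently (fun n => P n /\ Q n).
Proof.
move=> [N1 P_ev] Q_freq N; have [n] := Q_freq (maxn N N1).
rewrite geq_max => /andP[Nn N1n] Qn.
by exists n => //; split => //; apply: P_ev.
Qed.

Lemma limn_inf_sup_eventually_cst (R : realType) (u : R^nat) c N :
  (forall n, (N <= n)%N -> u n = c) -> limn_inf u = c /\ limn_sup u = c.
Proof.
move=> uc; have cvg_u : (u : nat -> R^o) @ \oo --> (c : R^o).
  by apply: cvg_near_cst; exists N => // n /= Nn; apply: uc.
by have [-> ->] := cvg_limn_inf_sup cvg_u.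
Qed.

Lemma eventually_all_seq (T : eqType) (P : nat -> T -> Prop) (s : seq T) :
  (forall m n x, (m <= n)%N -> P m x -> P n x) ->
  (forall x, x \in s -> exists N, P N x) ->
  exists N, forall n, (N <= n)%N -> forall x, x \in s -> P n x.
Proof.
move=> P_mono; elim: s => [|a s IH] sP; first by exists 0%N.
have [|N1 sN1] := IH; first by move=> x xs; apply: sP; rewrite in_cons xs orbT.
have [N2 aN2] := sP a (mem_head a s).
exists (maxn N1 N2) => n; rewrite geq_max => /andP[N1n N2n] x.
by rewrite in_cons => /orP[/eqP->|xs]; [apply: P_mono aN2 | apply: sN1].
Qed.

Section Subgroup.
Variables (G : zmodType) (H : set G).
Hypothesis H_subgroup : is_subgroup H.

Lemma subgroup0 : H 0. Proof. by case: H_subgroup. Qed.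

Lemma subgroupB x y : H x -> H y -> H (x - y).
Proof. by case: H_subgroup => _; apply. Qed.

Lemma subgroupN x : H x -> H (- x).
Proof. by move=> Hx; rewrite -sub0r; apply/subgroupB/Hx/subgroup0. Qed.

Lemma subgroupD x y : H x -> H y -> H (x + y).
Proof. by move=> Hx Hy; rewrite -[y]opprK; apply/subgroupB/subgroupN. Qed.

Lemma subgroup_sym x y : H (x - y) -> H (y - x).
Proof. by move=> /subgroupN; rewrite opprB. Qed.

Lemma subgroup_trans x y z : H (x - y) -> H (y - z) -> H (x - z).
Proof. by move=> Hxy Hyz; have := subgroupD Hxy Hyz; rewrite addrA subrK. Qed.

End Subgroup.

Lemma subgroupT (G : zmodType) : is_subgroup [set: G].
Proof. by split. Qed.

Section Cosets.
Variables (G : zmodType) (H : set G).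
Hypothesis H_subgroup : is_subgroup H.

Definition incongruent (F : {fset G}) :=
  {in F &, forall x y, H (x - y) -> x = y}.
Definition saturate (X : set G) : set G := [set x | exists2 a, X a & H (x - a)].

Lemma saturate_sub X : X `<=` saturate X.
Proof. by move=> x Xx; exists x => //; rewrite subrr; apply: subgroup0. Qed.

Lemma Stab_saturate X : H `<=` Stab (saturate X).
Proof.
by move=> h Hh x [a Xa Hxa]; exists a; rewrite // -addrA; apply: subgroupD.
Qed.

Lemma saturate_id P : H `<=` Stab P -> saturate P = P.
Proof.
move=> HP; apply/seteqP; split; last exact: saturate_sub.
by move=> x [a Pa Hxa]; rewrite -(subrK a x); apply: HP.
Qed.

Lemma coset_eq g r : H (g - r) -> coset H g = coset H r.
Proof.
move=> Hgr; apply/seteqP; split => x [h Hh <-].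
  by exists (g - r + h); [apply: subgroupD | rewrite addrA [r + _]addrC subrK].
exists (h - (g - r)); first exact: subgroupB.
by rewrite opprB addrCA [g + _]addrC subrK addrC.
Qed.

(* Incongruent sets of bounded size: a maximal one meets every class. *)
Lemma exists_transversal M : (forall F, incongruent F -> (#|` F| <= M)%N) ->
  exists2 R0 : {fset G}, incongruent R0 &
    forall g, exists2 r, r \in R0 & H (g - r).
Proof.
move=> F_bounded; apply: contrapT => no_transversal.
suff [F F_inc cardF] : exists2 F, incongruent F & #|` F| = M.+1.
  by have := F_bounded F F_inc; rewrite cardF ltnn.
elim: M.+1 => [|k [F F_inc <-]].
  by exists fset0%fset; rewrite ?cardfs0 // => x y; rewrite in_fset0.
have [g gF] : exists g, forall r, r \in F -> ~ H (g - r).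
  apply: contrapT => all_covered; apply: no_transversal; exists F => // g.
  apply: contrapT => g_new; apply: all_covered; exists g => r rF Hgr.
  by apply: g_new; exists r.
have gnF : g \notin F.
  by apply/negP => /gF; rewrite subrr; apply; apply: subgroup0.
exists (g |` F)%fset; last by rewrite cardfsU1 gnF.
move=> x y; rewrite !in_fset1U => /orP[/eqP->|xF] /orP[/eqP->|yF] // Hxy.
- by case: (gF y yF).
- by case: (gF x xF); apply: subgroup_sym.
- exact: F_inc.
Qed.

End Cosets.

Section ExhaustingSequence.
Variables (G : zmodType) (Gn : nat -> set G).
Hypothesis Gn_finite : forall n, finite_set (Gn n).
Hypothesis Gn_subgroup : forall n, is_subgroup (Gn n).
Hypothesis Gn_mono : forall n, Gn n `<=` Gn n.+1.
Hypothesis Gn_cover : \bigcup_n Gn n = [set: G].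

Lemma Gn_le m n : (m <= n)%N -> Gn m `<=` Gn n.
Proof.
elim: n => [|n IH]; first by rewrite leqn0 => /eqP ->.
by rewrite leq_eqVlt => /orP[/eqP-> // | /IH mn x /mn /Gn_mono].
Qed.

Lemma in_Gn_eventually (s : seq G) :
  exists N, forall n, (N <= n)%N -> forall x, x \in s -> Gn n x.
Proof.
apply: eventually_all_seq => [m n x /Gn_le|x _]; first exact.
by have : [set: G] x by []; rewrite -Gn_cover => -[n _ xn]; exists n.
Qed.

Definition trunc n (P : set G) : {fset G} := fset_set (P `&` Gn n).

Lemma truncP n P x : reflect (P x /\ Gn n x) (x \in trunc n P).
Proof.
rewrite /trunc in_fset_set; last exact: finite_setIr.
by apply: (iffP idP) => [/set_mem[]|[Px xn]] //; apply: mem_set.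
Qed.

Lemma dens_ratioE (R : realType) P n :
  dens_ratio R Gn P n = #|` trunc n P|%:R / #|` trunc n setT|%:R.
Proof. by rewrite /dens_ratio /trunc setTI. Qed.

Lemma trunc_sub n P Q : P `<=` Q -> (trunc n P `<=` trunc n Q)%fset.
Proof. by move=> PQ; apply/fsubsetP => x /truncP[/PQ Qx xn]; apply/truncP. Qed.

Lemma trunc_subgroup_gt0 n P : is_subgroup P -> (0 < #|` trunc n P|)%N.
Proof.
move=> Psub; rewrite cardfs_gt0; apply/fset0Pn; exists 0.
by apply/truncP; split; apply: subgroup0.
Qed.

Lemma dens_ratio_bounded (R : realType) P : bounded_fun (dens_ratio R Gn P).
Proof.
exists 1; split; first exact: num_real.
move=> M M1 n _; rewrite /= dens_ratioE ger0_norm ?divr_ge0 ?ler0n //.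
have G0 : 0 < #|` trunc n setT|%:R :> R.
  by rewrite ltr0n (trunc_subgroup_gt0 _ (subgroupT G)).
apply/ltW/(le_lt_trans _ M1); rewrite ler_pdivrMr // mul1r ler_nat.
exact/fsubset_leq_card/trunc_sub.
Qed.

Lemma card_trunc_oppset n P : #|` trunc n (oppset P)| = #|` trunc n P|.
Proof.
have -> : trunc n (oppset P) = [fset - x | x in trunc n P]%fset.
  apply/fsetP => x; apply/truncP/imfsetP.
    move=> [[y Py <-] yn]; exists y => //; apply/truncP; split => //.
    by rewrite -[y]opprK; apply: (subgroupN (Gn_subgroup n)).
  move=> [y /truncP[Py yn] ->].
  by split; [exists y | apply: (subgroupN (Gn_subgroup n))].
by rewrite card_imfset //=; apply: oppr_inj.
Qed.

Lemma fstab_sub_Gn n (X : {fset G}) : X != fset0%fset ->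
  [set` X] `<=` Gn n -> [set` fstab X] `<=` Gn n.
Proof.
move=> X0 XGn k /= kX; have /fset0Pn[x xX] := X0.
rewrite -(addrK x k); apply: subgroupB; first exact: Gn_subgroup.
  exact/XGn/(fstabP X0 _ kX).
exact: XGn.
Qed.

(* A period [h] permutes the finite set [trunc n X], hence so does [- h]. *)
Lemma Stab_subgroup (X : set G) : is_subgroup (Stab X).
Proof.
split=> [x Xx|g h Xg Xh]; first by rewrite add0r.
suff Xnh : Stab X (- h) by move=> x Xx; rewrite -addrA; apply/Xg/Xnh.
move=> x Xx; have [n /(_ n (leqnn n)) hxn] := in_Gn_eventually [:: h; x].
have hn : Gn n h by apply: hxn; rewrite mem_head.
have xT : x \in trunc n X.
  by apply/truncP; split; last by apply: hxn; rewrite !inE eqxx orbT.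
have T0 : trunc n X != fset0%fset by apply/fset0Pn; exists x.
have hT : h \in fstab (trunc n X).
  apply/(fstabP T0) => y /truncP[Xy yn]; apply/truncP; split; first exact: Xh.
  exact: subgroupD.
by have /truncP[] := fstabP T0 _ (fstabN T0 hT) _ xT.
Qed.

Section Transversal.
Variables (H : set G) (R0 : {fset G}).
Hypothesis H_subgroup : is_subgroup H.
Hypothesis R0_incongruent : incongruent H R0.
Hypothesis R0_complete : forall g, exists2 r, r \in R0 & H (g - r).

Definition reps (P : set G) : {fset G} := [fset r in R0 | r \in P]%fset.

Lemma repsP P r : (r \in reps P) = (r \in R0) && (r \in P).
Proof. by rewrite in_fset. Qed.

Lemma reps_setT : reps setT = R0.
Proof. by apply/fsetP => r; rewrite repsP in_setT andbT. Qed.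

Lemma reps_sub P : (reps P `<=` R0)%fset.
Proof. by apply/fsubsetP => r; rewrite repsP => /andP[]. Qed.

Lemma card_trunc_periodic n P : [set` R0] `<=` Gn n -> H `<=` Stab P ->
  #|` trunc n P| = (#|` reps P| * #|` trunc n H|)%N.
Proof.
move=> R0n HP.
have -> : trunc n P = (\bigcup_(r <- reps P) fshift r (trunc n H))%fset.
  apply/fsetP => x; apply/idP/bigfcupP => [/truncP[Px xn]|[r]].
    have [r rR0 Hxr] := R0_complete x; exists r.
      rewrite andbT repsP rR0; apply/mem_set; rewrite -(subrK x r).
      by apply: HP => //; apply: subgroup_sym.
    rewrite fshiftP; apply/truncP; split => //.
    exact: subgroupB (Gn_subgroup n) _ _ xn (R0n r rR0).
  rewrite andbT repsP => /andP[rR0 /set_mem Pr].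
  rewrite fshiftP => /truncP[Hxr xrn]; apply/truncP; rewrite -(subrK r x).
  by split; [apply: HP | apply: subgroupD (Gn_subgroup n) _ _ xrn (R0n r rR0)].
apply: card_bigfcup_disjoint => [r _|r r' rP r'P]; first exact: card_fshift.
move: rP r'P; rewrite !repsP => /andP[rR0 _] /andP[r'R0 _] rr'.
rewrite -fsetI_eq0; apply/eqP/fsetP => z; rewrite in_fset0 in_fsetI !fshiftP.
apply/negbTE/negP => /andP[/truncP[Hzr _] /truncP[Hzr' _]].
move/eqP: rr'; apply; apply: R0_incongruent => //.
exact: subgroup_trans (subgroup_sym _ Hzr) Hzr'.
Qed.

Lemma coset_inj : {in [set` R0] &, injective (coset H)}.
Proof.
move=> r r' rR0 r'R0 E.
have : coset H r r by exists 0; rewrite ?addr0 //; apply: subgroup0.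
rewrite E => -[h Hh rE]; apply: R0_incongruent.
- exact: set_mem rR0.
- exact: set_mem r'R0.
by rewrite -rE addrC addKr.
Qed.

Lemma card_cosets : (cosets H #= `I_#|` R0|)%card.
Proof.
have -> : cosets H = coset H @` [set` R0].
  apply/seteqP; split => [C [g ->]|_ [r rR0 <-]]; last by exists r.
  have [r rR0 Hgr] := R0_complete g.
  by exists r; rewrite ?(coset_eq H_subgroup Hgr).
by apply: card_eq_trans (inj_card_eq coset_inj) _; apply/card_eq_fsetP.
Qed.

Lemma card_cosets_meeting X :
  (cosets_meeting H X #= `I_#|` reps (saturate H X)|)%card.
Proof.
have -> : cosets_meeting H X = coset H @` [set` reps (saturate H X)].
  apply/seteqP; split => [C [[g ->] [_ [[h Hh <-] Xgh]]]|_ [r /= + <-]].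
    have [r rR0 Hgr] := R0_complete g.
    exists r; last by rewrite (coset_eq H_subgroup Hgr).
    rewrite /= repsP rR0; apply/mem_set; exists (g + h) => //.
    by rewrite opprD addrA; apply: subgroupB => //; apply: subgroup_sym.
  rewrite repsP => /andP[rR0 /set_mem[a Xa Har]]; split; first by exists r.
  exists a; split => //; exists (a - r); first exact: subgroup_sym.
  by rewrite addrC subrK.
have sub : {subset [set` reps (saturate H X)] <= [set` R0]}.
  by move=> r /set_mem rP; apply/mem_set; exact: (fsubsetP (reps_sub _)) _ rP.
apply: card_eq_trans (inj_card_eq (sub_in2 sub coset_inj)) _.
exact/card_eq_fsetP.
Qed.

Lemma subgroup_density (R : realType) :
  ldens R Gn H = (#|` R0|%:R)^-1 /\ udens R Gn H = (#|` R0|%:R)^-1.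
Proof.
have [N R0N] := in_Gn_eventually R0.
apply: (@limn_inf_sup_eventually_cst _ _ _ N) => n Nn.
rewrite dens_ratioE.
have R0n : [set` R0] `<=` Gn n by move=> r; apply: R0N.
rewrite (card_trunc_periodic R0n (_ : H `<=` Stab setT)) // reps_setT.
rewrite natrM invfM mulrCA mulfV ?mulr1 // pnatr_eq0 -lt0n.
exact: trunc_subgroup_gt0.
Qed.

End Transversal.

Section SumsetDensity.
Variables (R : realType) (A B : set G).
Let S := sumset A B.
Let H := Stab S.
Let H_subgroup : is_subgroup H := Stab_subgroup S.

Definition small_sumset (d : R) n :=
  #|` trunc n S|%:R + d * #|` trunc n setT|%:R <
    (#|` trunc n A| + #|` trunc n B|)%:R.

Lemma fsumset_trunc_sub n :
  (fsumset (trunc n A) (trunc n B) `<=` trunc n S)%fset.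
Proof.
apply/fsubsetP => _ /fsumsetP[a [b [/truncP[Aa an] /truncP[Bb bn] ->]]].
apply/truncP; split; first by exists a => //; exists b.
exact: subgroupD.
Qed.

Lemma card_fstab_small d n : small_sumset d n ->
  trunc n A != fset0%fset -> trunc n B != fset0%fset ->
  d * #|` trunc n setT|%:R < #|` fstab (fsumset (trunc n A) (trunc n B))|%:R.
Proof.
rewrite /small_sumset natrD => small A0 B0.
have kneser := weak_kneser A0 B0; rewrite /stab_weight in kneser.
have TS := fsubset_leq_card (fsumset_trunc_sub n).
have : (#|` trunc n A| + #|` trunc n B| <= #|` trunc n S| +
          #|` fstab (fsumset (trunc n A) (trunc n B))|)%N by lia.
by rewrite -(ler_nat R) !natrD; lra.
Qed.

Definition separated n (F : {fset G}) :=
  forall x y, x \in F -> y \in F -> x != y ->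
  exists a b, [/\ a \in trunc n A, b \in trunc n B & ~ S (x - y + (a + b))].

Lemma separated_eventually F : incongruent H F ->
  exists N, forall n, (N <= n)%N -> separated n F.
Proof.
move=> F_inc.
pose sep n (xy : G * G) := xy.1 = xy.2 \/ exists a b,
  [/\ a \in trunc n A, b \in trunc n B & ~ S (xy.1 - xy.2 + (a + b))].
have [N sepN] : exists N, forall n, (N <= n)%N ->
    forall xy, xy \in [seq (x, y) | x <- F, y <- F] -> sep n xy.
  apply: eventually_all_seq => [m n [x y] mn|[x y]].
    rewrite /sep /= => -[->|[a [b [/truncP[Aa am] /truncP[Bb bm] nS]]]].
      by left.
    right; exists a, b.
    by split=> //; apply/truncP; split=> //; apply: Gn_le mn _ _.
  move=> /allpairsP[[x' y'] /= [xF yF [-> ->]]].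
  have [->|xy] := eqVneq x' y'; first by exists 0%N; left.
  have [s Ss nSs] : exists2 s, S s & ~ S (x' - y' + s).
    apply: contrapT => per; move/eqP: xy; apply; apply: F_inc => // s Ss.
    by apply: contrapT => nSs; apply: per; exists s.
  case: Ss nSs => a Aa [b Bb <-] nSab.
  have [n /(_ n (leqnn n)) abn] := in_Gn_eventually [:: a; b].
  exists n; right; exists a, b.
  by split=> //; apply/truncP; split=> //; apply: abn; rewrite !inE eqxx ?orbT.
exists N => n Nn x y xF yF xy.
have [/= E|//] := sepN n Nn (x, y) (allpairs_f pair xF yF).
by move: xy; rewrite E eqxx.
Qed.

(* Distinct elements of a separated set lie in distinct cosets of the
   stabilizer of [trunc n A + trunc n B]. *)
Lemma card_mul_fstab_le n (F : {fset G}) :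
  [set` F] `<=` Gn n -> separated n F ->
  trunc n A != fset0%fset -> trunc n B != fset0%fset ->
  (#|` F| * #|` fstab (fsumset (trunc n A) (trunc n B))| <=
     #|` trunc n setT|)%N.
Proof.
move=> FGn F_sep A0 B0; set T := fsumset _ _; have T0 := fsumset_neq0 A0 B0.
have TGn : [set` T] `<=` Gn n.
  by move=> t /(fsubsetP (fsumset_trunc_sub n)) /truncP[].
rewrite -(@card_bigfcup_disjoint _ _ F (fun f => fshift f (fstab T))) //.
- apply: fsubset_leq_card; apply/fsubsetP => z /bigfcupP[f /andP[fF _]].
  rewrite fshiftP => fk; apply/truncP; split => //; rewrite -(subrK f z).
  apply: (subgroupD (Gn_subgroup n)); last exact: FGn.
  exact: fstab_sub_Gn T0 TGn _ fk.
- by move=> f _; rewrite card_fshift.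
move=> f f' fF f'F ff'; rewrite -fsetI_eq0; apply/eqP/fsetP => z.
rewrite in_fset0 in_fsetI !fshiftP; apply/negbTE/negP => /andP[zf zf'].
have [a [b [aA bB nS]]] := F_sep f f' fF f'F ff'; apply: nS.
have := fstabP T0 _ (fstabB T0 zf' zf) _ (mem_fsumset aA bB).
rewrite opprB [_ + (f - z)]addrC [f - z + _]addrA subrK.
by move=> /(fsubsetP (fsumset_trunc_sub n)) /truncP[].
Qed.

Lemma incongruent_card_lt d : 0 < d ->
  frequently (small_sumset d) ->
  forall F, incongruent H F -> (1 < #|` F|)%N -> #|` F|%:R * d < 1.
Proof.
move=> d0 small_often F F_inc F2.
have [N1 FN1] := in_Gn_eventually F.
have [N2 sepN2] := separated_eventually F_inc.
have [n] := small_often (maxn N1 N2); rewrite geq_max => /andP[N1n N2n] small.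
have FGn : [set` F] `<=` Gn n by move=> x; apply: FN1.
have F_sep := sepN2 n N2n.
have [x xF] : exists x, x \in F.
  by apply/fset0Pn; rewrite -cardfs_gt0 ltnW.
have /fset0Pn[y] : (F `\ x)%fset != fset0.
  by move: F2; rewrite (cardfsD1 x) xF add1n ltnS cardfs_gt0.
rewrite in_fsetD1 => /andP[yx yF].
have [a [b [aA bB _]]] := F_sep y x yF xF yx.
have A0 : trunc n A != fset0%fset by apply/fset0Pn; exists a.
have B0 : trunc n B != fset0%fset by apply/fset0Pn; exists b.
have K_gt := card_fstab_small small A0 B0.
have := card_mul_fstab_le FGn F_sep A0 B0; rewrite -(ler_nat R) natrM.
have : 0 < #|` trunc n setT|%:R :> R.
  by rewrite ltr0n (trunc_subgroup_gt0 _ (subgroupT G)).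
have : 0 < #|` F|%:R :> R by rewrite ltr0n ltnW.
by nra.
Qed.

Lemma exists_transversal_small d : 0 < d ->
  frequently (small_sumset d) ->
  exists2 R0 : {fset G}, incongruent H R0 &
    forall g, exists2 r, r \in R0 & H (g - r).
Proof.
move=> d0 small_often; apply: (exists_transversal H_subgroup) => F F_inc.
have dinv0 : 0 < d^-1 by rewrite invr_gt0.
have bound_gt : d^-1 < (Num.bound d^-1)%:R by apply/archi_boundP/ltW.
have [F1|F2] := leqP #|` F| 1.
  by apply: leq_trans F1 _; rewrite -(ltr0n R); apply: lt_trans bound_gt.
rewrite -(ler_nat R); apply/ltW/(le_lt_trans _ bound_gt).
rewrite -[d^-1]mul1r ler_pdivlMr //.
exact/ltW/(incongruent_card_lt d0 small_often F_inc).
Qed.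

Section Representatives.
Variable R0 : {fset G}.
Hypothesis R0_incongruent : incongruent H R0.
Hypothesis R0_complete : forall g, exists2 r, r \in R0 & H (g - r).

Let ncosets X := #|` reps R0 (saturate H X)|.

Lemma saturate_sumset : saturate H S = S.
Proof. exact: saturate_id. Qed.

Lemma card_trunc_saturate n X : [set` R0] `<=` Gn n ->
  #|` trunc n (saturate H X)| = (ncosets X * #|` trunc n H|)%N.
Proof. by move=> R0n; apply/card_trunc_periodic/Stab_saturate. Qed.

Lemma card_trunc_le n X : [set` R0] `<=` Gn n ->
  (#|` trunc n X| <= ncosets X * #|` trunc n H|)%N.
Proof.
move=> R0n; rewrite -card_trunc_saturate //.
by apply/fsubset_leq_card/trunc_sub/saturate_sub.
Qed.

Lemma ncosets_sumset_lt d n : 0 <= d -> [set` R0] `<=` Gn n ->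
  small_sumset d n -> (ncosets S < ncosets A + ncosets B)%N.
Proof.
move=> d0 R0n small.
have : (#|` trunc n S| < #|` trunc n A| + #|` trunc n B|)%N.
  rewrite -(ltr_nat R); apply: le_lt_trans small; rewrite lerDl.
  by rewrite mulr_ge0 ?ler0n.
rewrite -{1}saturate_sumset card_trunc_saturate // => /leq_trans/(_ (leq_add
  (card_trunc_le A R0n) (card_trunc_le B R0n))).
by rewrite -mulnDl ltn_pmul2r // trunc_subgroup_gt0.
Qed.

Lemma fsumset_trunc_saturate n : [set` R0] `<=` Gn n ->
  fsumset (trunc n (saturate H A)) (trunc n (saturate H B)) = trunc n S.
Proof.
move=> R0n; apply/fsetP => z; apply/idP/idP.
  move=> /fsumsetP[x [y [/truncP[[a Aa Hxa] xn] /truncP[[b Bb Hyb] yn] ->]]].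
  apply/truncP; split; last exact: subgroupD.
  have -> : x + y = x - a + (y - b) + (a + b) by rewrite addrACA !subrK.
  by apply: (subgroupD H_subgroup Hxa Hyb); exists a => //; exists b.
move=> /truncP[[a Aa [b Bb abz]] zn]; have [r rR0 Har] := R0_complete a.
have rn : Gn n r := R0n r rR0.
rewrite -(subrK r z) [_ + r]addrC.
apply: mem_fsumset; apply/truncP; split => //.
- by exists a => //; apply: subgroup_sym H_subgroup _ _ Har.
- by exists b; rewrite // -abz addrAC addrK.
- exact: subgroupB (Gn_subgroup n) _ _ zn rn.
Qed.

Lemma fstab_trunc_sumset_sub n : [set` R0] `<=` Gn n ->
  trunc n S != fset0%fset -> (fstab (trunc n S) `<=` trunc n H)%fset.
Proof.
move=> R0n T0; apply/fsubsetP => g gK; apply/truncP; split; last first.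
  by apply: fstab_sub_Gn T0 _ _ gK => t /truncP[].
move=> s Ss; have [r rR0 Hsr] := R0_complete s.
have rT : r \in trunc n S.
  apply/truncP; split; last exact: R0n.
  by rewrite -(subrK s r); apply: (subgroup_sym H_subgroup Hsr).
have /truncP[Sgr _] := fstabP T0 _ gK _ rT.
by rewrite -(subrK r s) addrCA; apply: Hsr.
Qed.

Lemma ncosets_eq0 X : (forall x, ~ X x) -> ncosets X = 0%N.
Proof.
move=> X0; apply/eqP; rewrite cardfs_eq0 -fsubset0; apply/fsubsetP => r.
by rewrite repsP => /andP[_ /set_mem[x /X0]].
Qed.

(* With [S] empty, [H] is all of [G], so [R0] has at most one element. *)
Lemma ncosets_le1 X : (forall s, ~ S s) -> (ncosets X <= 1)%N.
Proof.
move=> S0; apply: leq_trans (fsubset_leq_card (reps_sub _ _)) _.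
have [->|/fset0Pn[x xR0]] := eqVneq R0 fset0%fset; first by rewrite cardfs0.
rewrite -(cardfs1 x); apply/fsubset_leq_card/fsubsetP => y yR0.
by rewrite in_fset1; apply/eqP/R0_incongruent => // s /S0.
Qed.

Lemma trunc_saturate_neq0 n X x : [set` R0] `<=` Gn n -> X x ->
  trunc n (saturate H X) != fset0%fset.
Proof.
move=> R0n Xx; have [r rR0 Hxr] := R0_complete x; apply/fset0Pn; exists r.
apply/truncP; split; last exact: R0n.
by exists x => //; apply: (subgroup_sym H_subgroup).
Qed.

(* Kneser's inequality for the truncations of the saturations of [A] and [B],
   which are unions of full cosets of [H] inside [Gn n]. *)
Lemma ncosets_sumset_le : (ncosets A + ncosets B <= ncosets S + 1)%N.
Proof.
have [[a0 Aa0]|A0] := pselect (exists a, A a); last first.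
  rewrite ncosets_eq0 => [|a Aa]; last by apply: A0; exists a.
  rewrite add0n (leq_trans _ (leq_addl _ _)) // ncosets_le1 // => s [a Aa _].
  by apply: A0; exists a.
have [[b0 Bb0]|B0] := pselect (exists b, B b); last first.
  rewrite [X in (_ + X)%N]ncosets_eq0 => [|b Bb]; last by apply: B0; exists b.
  rewrite addn0 (leq_trans _ (leq_addl _ _)) // ncosets_le1 // => s.
  move=> [a _ [b Bb _]].
  by apply: B0; exists b.
have [N /(_ N (leqnn N)) R0n] := in_Gn_eventually R0.
have X0 := trunc_saturate_neq0 R0n Aa0; have Y0 := trunc_saturate_neq0 R0n Bb0.
have := weak_kneser X0 Y0; rewrite fsumset_trunc_saturate // /stab_weight.
have T0 : trunc N S != fset0%fset.
  by rewrite -(fsumset_trunc_saturate R0n) fsumset_neq0.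
have KH := fsubset_leq_card (fstab_trunc_sumset_sub R0n T0).
move=> /leq_trans/(_ (leq_add (leqnn _) KH)).
rewrite -{1}saturate_sumset !card_trunc_saturate //.
by have := trunc_subgroup_gt0 N H_subgroup; nia.
Qed.

Lemma ncosets_sumset d : 0 < d ->
  frequently (small_sumset d) ->
  (ncosets S)%:Z = (ncosets A)%:Z + (ncosets B)%:Z - 1.
Proof.
move=> d0 small_often; have [N R0N] := in_Gn_eventually R0.
have [n Nn small] := small_often N.
have R0n : [set` R0] `<=` Gn n by move=> r; apply: R0N.
have := ncosets_sumset_lt (ltW d0) R0n small; have := ncosets_sumset_le.
lia.
Qed.

End Representatives.

Theorem kneser_density_of_small d : 0 < d ->
  frequently (small_sumset d) ->
  exists q : nat,
    [/\ (0 < q)%N,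
        (cosets H #= `I_q)%card,
        ldens R Gn H = udens R Gn H,
        ldens R Gn H = (q%:R)^-1
      & exists a b c : nat,
          [/\ (cosets_meeting H A #= `I_a)%card,
              (cosets_meeting H B #= `I_b)%card,
              (cosets_meeting H S #= `I_c)%card
            & c%:Z = a%:Z + b%:Z - 1]].
Proof.
move=> d0 small_often.
have [R0 R0_inc R0_complete] := exists_transversal_small d0 small_often.
have [ldH udH] := subgroup_density H_subgroup R0_inc R0_complete R.
exists #|` R0|; split; rewrite ?ldH ?udH //.
- have [r rR0 _] := R0_complete 0.
  by rewrite cardfs_gt0; apply/fset0Pn; exists r.
- exact: card_cosets.
exists #|` reps R0 (saturate H A)|, #|` reps R0 (saturate H B)|.
exists #|` reps R0 (saturate H S)|.
by split; try exact: card_cosets_meeting; apply: ncosets_sumset d0 small_often.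
Qed.

Lemma small_sumset_of_ratio d n :
  dens_ratio R Gn S n + d < dens_ratio R Gn A n + dens_ratio R Gn B n ->
  small_sumset d n.
Proof.
have G0 : 0 < #|` trunc n setT|%:R :> R.
  by rewrite ltr0n (trunc_subgroup_gt0 _ (subgroupT G)).
rewrite !dens_ratioE /small_sumset -(ltr_pM2r G0) !mulrDl !divfK ?gt_eqF //.
by rewrite natrD.
Qed.

Lemma small_sumset_often_of_gap (lA lB lS : R) : lS < lA + lB ->
  (forall e, 0 < e -> frequently (fun n =>
     [/\ lA - e < dens_ratio R Gn A n, lB - e < dens_ratio R Gn B n
       & dens_ratio R Gn S n < lS + e])) ->
  exists2 d, 0 < d & frequently (small_sumset d).
Proof.
move=> gap close_often; pose d := (lA + lB - lS) / 4.
have d0 : 0 < d by rewrite divr_gt0 // subr_gt0.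
exists d => // N; have [n Nn [An Bn Sn]] := close_often d d0 N.
by exists n => //; apply: small_sumset_of_ratio; rewrite /d in An Bn Sn *; lra.
Qed.

Section Gaps.
Variable e : R.
Hypothesis e_gt0 : 0 < e.
Let lt_sub l : l - e < l. Proof. by rewrite ltrBlDr ltrDl. Qed.
Let lt_add l : l < l + e. Proof. by rewrite ltrDl. Qed.
Let bnd := dens_ratio_bounded R.

Lemma close_often_ldens : frequently (fun n =>
  [/\ ldens R Gn A - e < dens_ratio R Gn A n,
      ldens R Gn B - e < dens_ratio R Gn B n
    & dens_ratio R Gn S n < ldens R Gn S + e]).
Proof.
have := limn_inf_lt_frequently (bnd S) (lt_add (ldens R Gn S)).
move/(frequently_and_eventually (limn_inf_gt_eventually (bnd B) (lt_sub _))).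
move/(frequently_and_eventually (limn_inf_gt_eventually (bnd A) (lt_sub _))).
by move=> often N; have [n Nn [An [Bn Sn]]] := often N; exists n.
Qed.

Lemma close_often_udens_ldens : frequently (fun n =>
  [/\ udens R Gn A - e < dens_ratio R Gn A n,
      ldens R Gn B - e < dens_ratio R Gn B n
    & dens_ratio R Gn S n < udens R Gn S + e]).
Proof.
have := limn_sup_gt_frequently (bnd A) (lt_sub (udens R Gn A)).
move/(frequently_and_eventually (limn_inf_gt_eventually (bnd B) (lt_sub _))).
move/(frequently_and_eventually (limn_sup_lt_eventually (bnd S) (lt_add _))).
by move=> often N; have [n Nn [Sn [Bn An]]] := often N; exists n.
Qed.

Lemma close_often_udens : dens_ratio R Gn B = dens_ratio R Gn A ->
  frequently (fun n =>
  [/\ udens R Gn A - e < dens_ratio R Gn A n,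
      udens R Gn B - e < dens_ratio R Gn B n
    & dens_ratio R Gn S n < udens R Gn S + e]).
Proof.
rewrite /udens => ->; have := limn_sup_gt_frequently (bnd A) (lt_sub _).
move/(frequently_and_eventually (limn_sup_lt_eventually (bnd S) (lt_add _))).
by move=> often N; have [n Nn [Sn An]] := often N; exists n.
Qed.

End Gaps.

End SumsetDensity.

End ExhaustingSequence.

Unset Implicit Arguments.
Set Strict Implicit.

Theorem theorem1p1 (R : realType) (G : zmodType) (Gn : nat -> set G)
  (A B : set G) :
  sigma_finite_seq Gn ->
  [\/ ldens R Gn (sumset A B) < ldens R Gn A + ldens R Gn B,
      udens R Gn (sumset A B) < udens R Gn A + udens R Gn B
        /\ (A = B \/ A = oppset B)
    | udens R Gn (sumset A B) < udens R Gn A + ldens R Gn B] ->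
  let H := Stab (sumset A B) in
  exists q : nat,
    [/\ (0 < q)%N,
        (cosets H #= `I_q)%card,
        ldens R Gn H = udens R Gn H,
        ldens R Gn H = (q%:R)^-1
      & exists a b c : nat,
          [/\ (cosets_meeting H A #= `I_a)%card,
              (cosets_meeting H B #= `I_b)%card,
              (cosets_meeting H (sumset A B) #= `I_c)%card
            & c%:Z = a%:Z + b%:Z - 1]].
Proof.
move=> [_ [Gn_finite Gn_subgroup Gn_mono Gn_cover]] hyp H.
have [d d0 small_often] : exists2 d : R, 0 < d &
    frequently (small_sumset Gn A B d).
  case: hyp => [gap | [gap AB] | gap];
    apply: (small_sumset_often_of_gap Gn_finite Gn_subgroup gap) => e e0.
  - exact: close_often_ldens.
  - apply: close_often_udens => //; apply/funext => n.
    rewrite !dens_ratioE; case: AB => -> //.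
    by rewrite (card_trunc_oppset Gn_finite Gn_subgroup).
  - exact: close_often_udens_ldens.
exact: kneser_density_of_small d0 small_often.
Qed.
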